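(* $|(DF)_{(y,\theta)}v|\ge4|v|$ for all $(y,\theta)\in Y$ (at which $F$ is differentiable) and all $v\in\mathbb{R}^2$.
   Context: Let $\mathbb{T}=\mathbb{R}/\mathbb{Z}$, $M=[0,1]\times\mathbb{T}$. Fix $\gamma>0$. Let $u:[0,\tfrac34]\times\mathbb{T}\to(0,\infty)$ be $C^2$ with $u(0,\theta)=c_0>0$. Define $f(x,\theta)=(f_1(x,\theta),4\theta\bmod1)$, $f_1(x,\theta)=x(1+x^\gamma u(x,\theta))$ for $0\le x\le\tfrac34$, $f_1=4x-3$ for $\tfrac34<x\le1$. Standing assumptions: $x(1+x^\gamma u)\le1$ on $[0,\tfrac34]\times\mathbb{T}$; $|(Df)_{(x,\theta)}v|\ge|v|$ on $[0,\tfrac34]\times\mathbb{T}$; $f_1(\tfrac34,\theta)>\tfrac{15}{16}$; $\sup|x\,\partial u/\partial x|$, $\sup|\partial u/\partial\theta|$ sufficiently small. Let $X_i=\{(x,\theta):0\le x\le f_1(\tfrac34,\tfrac{i+\theta}{4})\}$, $i=0,\dots,3$, $X=\bigcup_iX_i$, $Y=([\tfrac34,1]\times\mathbb{T})\cap X$, $\varphi:Y\to\mathbb{Z}^+$ the first return time of $f$ to $Y$ and $F=f^\varphi:Y\to Y$ the first return map. *)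

From Stdlib Require Import Reals Lra.
Open Scope R_scope.

(* Points of R^2 (and of M = [0,1] x T, with theta represented in [0,1)). *)
Definition pt := (R * R)%type.

Definition norm2 (v : pt) : R := sqrt (fst v ^ 2 + snd v ^ 2).

Definition mat := ((R * R) * (R * R))%type.
Definition mapply (L : mat) (v : pt) : pt :=
  let '((a, b), (c, d)) := L in
  (a * fst v + b * snd v, c * fst v + d * snd v).

Definition psub (p q : pt) : pt := (fst p - fst q, snd p - snd q).

(* x^gamma for x >= 0 (with 0^gamma = 0, gamma > 0). *)
Definition rpow (x g : R) : R := if Rlt_dec 0 x then Rpower x g else 0.

Definition frac (t : R) : R := t - IZR (Int_part t).

(* representative of d mod 1 in [-1/2, 1/2): the chart difference on T *)
Definition twrap (d : R) : R := d - IZR (Int_part (d + / 2)).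

Definition mdiff (p q : pt) : pt := (fst p - fst q, twrap (snd p - snd q)).

Definition f1_left (gam : R) (u : R -> R -> R) (x t : R) : R :=
  x * (1 + rpow x gam * u x t).

Definition f1 (gam : R) (u : R -> R -> R) (x t : R) : R :=
  if Rle_dec x (3/4) then f1_left gam u x t else 4 * x - 3.

Definition fmap (gam : R) (u : R -> R -> R) (p : pt) : pt :=
  (f1 gam u (fst p) (snd p), frac (4 * snd p)).

Definition inM (p : pt) : Prop :=
  0 <= fst p <= 1 /\ 0 <= snd p < 1.

Definition inX (gam : R) (u : R -> R -> R) (p : pt) : Prop :=
  inM p /\ exists i : nat, (i <= 3)%nat /\
    0 <= fst p <= f1 gam u (3/4) ((INR i + snd p) / 4).

Definition inY (gam : R) (u : R -> R -> R) (p : pt) : Prop :=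
  3/4 <= fst p <= 1 /\ inX gam u p.

Definition first_return (gam : R) (u : R -> R -> R) (p : pt) (n : nat) : Prop :=
  (1 <= n)%nat /\ inY gam u (Nat.iter n (fmap gam u) p) /\
  forall k : nat, (1 <= k)%nat -> (k < n)%nat ->
    ~ inY gam u (Nat.iter k (fmap gam u) p).

(* The first return map F = f^phi : Y -> Y is differentiable at p (in the sense
   of maps of the surface M, in the natural chart (x, theta)) with derivative L:
   F is defined on a neighbourhood of p contained in Y and
   F(q) - F(p) = L (q - p) + o(|q - p|). *)
Definition F_has_derivative (gam : R) (u : R -> R -> R) (p : pt) (L : mat) : Prop :=
  exists np : nat, first_return gam u p np /\
  (exists r : R, 0 < r /\
     forall q : pt, inM q -> norm2 (mdiff q p) < r ->
       inY gam u q /\ exists n : nat, first_return gam u q n) /\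
  forall eps : R, 0 < eps -> exists del : R, 0 < del /\
    forall (q : pt) (n : nat), inM q -> norm2 (mdiff q p) < del ->
      first_return gam u q n ->
      norm2 (psub (mdiff (Nat.iter n (fmap gam u) q) (Nat.iter np (fmap gam u) p))
                  (mapply L (mdiff q p)))
        <= eps * norm2 (mdiff q p).

Definition has_derivative_within (S : pt -> Prop) (g : pt -> pt) (p : pt) (L : mat) : Prop :=
  forall eps : R, 0 < eps -> exists del : R, 0 < del /\
    forall q : pt, S q -> norm2 (psub q p) < del ->
      norm2 (psub (psub (g q) (g p)) (mapply L (psub q p))) <= eps * norm2 (psub q p).

Definition cont2 (g : R -> R -> R) : Prop :=
  forall x t eps, 0 < eps -> exists del, 0 < del /\
    forall x' t', Rabs (x' - x) < del -> Rabs (t' - t) < del ->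
      Rabs (g x' t' - g x t) < eps.

Definition is_dx (g gx : R -> R -> R) : Prop :=
  forall x t, derivable_pt_lim (fun s => g s t) x (gx x t).
Definition is_dt (g gt : R -> R -> R) : Prop :=
  forall x t, derivable_pt_lim (fun s => g x s) t (gt x t).

(* u is C^2 on R^2: continuous partial derivatives up to order 2.
   (A C^2 function on [0,3/4] x T extends to such a function; only its
   values on [0,3/4] x R matter.) *)
Definition C2 (u : R -> R -> R) : Prop :=
  exists ux ut uxx uxt utx utt : R -> R -> R,
    is_dx u ux /\ is_dt u ut /\
    is_dx ux uxx /\ is_dt ux uxt /\ is_dx ut utx /\ is_dt ut utt /\
    cont2 u /\ cont2 ux /\ cont2 ut /\
    cont2 uxx /\ cont2 uxt /\ cont2 utx /\ cont2 utt.

Definition left_strip (p : pt) : Prop := 0 <= fst p <= 3/4.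

Definition flift (gam : R) (u : R -> R -> R) (p : pt) : pt :=
  (f1_left gam u (fst p) (snd p), 4 * snd p).

(* Right of x = 3/4 the map is affine with derivative 4 Id, and on the left strip Df expands
   weakly by hypothesis.  If F is differentiable at p in Y then p lies strictly right of 3/4
   (F is defined on a neighbourhood of p inside Y), so by the chain rule the Jacobian G of f^n
   along the return orbit of p expands by 4.  It remains to show DF(p) = G, and for that it
   suffices to find two independent directions w such that the points p + h w, h -> 0+, still
   return at time n.  The earlier iterates stay off Y because Y is closed.  The n-th iterate lands
   in Y because G is upper triangular with positive corner: if f^n(p) lies on the left edge of Y
   we move right, otherwise we move left, which lowers f^n faster than the top of Y can move. *)

From Stdlib Require Import Reals Lra Lia ZArith.
From Coquelicot Require Import Coquelicot.
Open Scope R_scope.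

Lemma eq_0_of_le_eps z C : (forall eps, 0 < eps -> Rabs z <= eps * C) -> z = 0.
Proof.
  intros Hz; destruct (Req_dec z 0) as [|Hne]; [assumption|].
  assert (Hpos : 0 < Rabs z) by (apply Rabs_pos_lt; assumption).
  assert (HC : 0 < C).
  { specialize (Hz 1 Rlt_0_1); lra. }
  specialize (Hz (Rabs z / (2 * C)) ltac:(apply Rdiv_lt_0_compat; lra)).
  replace (Rabs z / (2 * C) * C) with (Rabs z / 2) in Hz by (field; lra); lra.
Qed.

Lemma Rabs_sub_le_of_estimates h z a b e1 e2 : 0 < h ->
  Rabs (z - h * a) <= e1 * h -> Rabs (z - h * b) <= e2 * h -> Rabs (a - b) <= e1 + e2.
Proof.
  intros Hh Ha Hb; apply (Rmult_le_reg_l h); [assumption|].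
  rewrite <- (Rabs_right h) at 1 by lra; rewrite <- Rabs_mult.
  replace (h * (a - b)) with ((z - h * b) - (z - h * a)) by ring.
  eapply Rle_trans; [apply Rabs_triang|]; rewrite Rabs_Ropp; lra.
Qed.

Lemma Rabs_Rmax_sub a b c d e :
  Rabs (a - c) <= e -> Rabs (b - d) <= e -> Rabs (Rmax a b - Rmax c d) <= e.
Proof.
  intros H1 H2; apply Rabs_le_between in H1, H2; apply Rabs_le_between.
  unfold Rmax; repeat destruct Rle_dec; lra.
Qed.

Lemma le_Rmax4 x a b c d :
  x <= Rmax (Rmax a b) (Rmax c d) <-> x <= a \/ x <= b \/ x <= c \/ x <= d.
Proof. unfold Rmax; repeat destruct Rle_dec; split; intros; try destruct_all or; lra. Qed.

Lemma Int_part_add_IZR r k : Int_part (r + IZR k) = (Int_part r + k)%Z.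
Proof.
  symmetry; apply Int_part_spec; rewrite plus_IZR.
  destruct (base_Int_part r); lra.
Qed.

Lemma periodic_IZR (g : R -> R) :
  (forall t, g (t + 1) = g t) -> forall k t, g (t + IZR k) = g t.
Proof.
  intros g_per k; induction k as [|k IH|k IH] using Z.peano_ind; intros t.
  - now rewrite Rplus_0_r.
  - rewrite succ_IZR, <- Rplus_assoc, g_per; apply IH.
  - rewrite <- (IH t), <- Z.sub_1_r, minus_IZR, <- (g_per (t + (IZR k - 1))); f_equal; ring.
Qed.

Lemma frac_bounds t : 0 <= frac t < 1.
Proof. unfold frac; destruct (base_Int_part t); lra. Qed.

Lemma frac_id t : 0 <= t < 1 -> frac t = t.
Proof. intros Ht; unfold frac; rewrite <- (Int_part_spec t 0%Z); simpl; lra. Qed.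

Lemma frac_add_IZR t k : frac (t + IZR k) = frac t.
Proof. unfold frac; rewrite Int_part_add_IZR, plus_IZR; ring. Qed.

Lemma periodic_frac (g : R -> R) : (forall t, g (t + 1) = g t) -> forall t, g (frac t) = g t.
Proof.
  intros g_per t; rewrite <- (periodic_IZR g g_per (Int_part t) (frac t)).
  unfold frac; f_equal; ring.
Qed.

Lemma twrap_id d : - (1/2) <= d < 1/2 -> twrap d = d.
Proof. intros Hd; unfold twrap; rewrite <- (Int_part_spec (d + /2) 0%Z); simpl; lra. Qed.

Lemma twrap_add_IZR d k : twrap (d + IZR k) = twrap d.
Proof.
  unfold twrap; replace (d + IZR k + / 2) with (d + / 2 + IZR k) by ring.
  rewrite Int_part_add_IZR, plus_IZR; ring.
Qed.

Lemma twrap_frac_sub a b : Rabs (a - b) < 1/2 -> twrap (frac a - frac b) = a - b.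
Proof.
  intros Hab; unfold frac.
  replace (a - IZR (Int_part a) - (b - IZR (Int_part b)))
    with (a - b + IZR (Int_part b - Int_part a)) by (rewrite minus_IZR; ring).
  rewrite twrap_add_IZR; apply twrap_id; apply Rabs_def2 in Hab; lra.
Qed.

Lemma norm2_le_abs_sum a b : norm2 (a, b) <= Rabs a + Rabs b.
Proof.
  unfold norm2; cbn [fst snd].
  pose proof (Rabs_pos a); pose proof (Rabs_pos b).
  rewrite <- (sqrt_pow2 (Rabs a + Rabs b)) by lra.
  apply sqrt_le_1_alt; rewrite <- (pow2_abs a), <- (pow2_abs b); nra.
Qed.

Lemma abs_fst_le_norm2 v : Rabs (fst v) <= norm2 v.
Proof. unfold norm2; rewrite <- sqrt_Rsqr_abs; apply sqrt_le_1_alt; unfold Rsqr; nra. Qed.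

Lemma abs_snd_le_norm2 v : Rabs (snd v) <= norm2 v.
Proof. unfold norm2; rewrite <- sqrt_Rsqr_abs; apply sqrt_le_1_alt; unfold Rsqr; nra. Qed.

Lemma norm2_scale c a b : norm2 (c * a, c * b) = Rabs c * norm2 (a, b).
Proof.
  unfold norm2; cbn [fst snd]; rewrite <- sqrt_Rsqr_abs, <- sqrt_mult_alt by apply Rle_0_sqr.
  f_equal; unfold Rsqr; ring.
Qed.

(** * Jacobians of plane maps *)

Definition mat_mul (A B : mat) : mat :=
  let '((a, b), (c, d)) := A in
  let '((a', b'), (c', d')) := B in
  ((a * a' + b * c', a * b' + b * d'), (c * a' + d * c', c * b' + d * d')).

Definition mat_id : mat := ((1, 0), (0, 1)).

Lemma mapply_mul A B w : mapply (mat_mul A B) w = mapply A (mapply B w).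
Proof.
  destruct A as [[a b] [c d]], B as [[a' b'] [c' d']], w as [w1 w2].
  unfold mapply, mat_mul; cbn [fst snd]; f_equal; ring.
Qed.

Lemma fst_mapply J w : fst (mapply J w) = fst (fst J) * fst w + snd (fst J) * snd w.
Proof. now destruct J as [[a b] [c d]]. Qed.

Lemma mapply_scale J h a b :
  mapply J (h * a, h * b) = (h * fst (mapply J (a, b)), h * snd (mapply J (a, b))).
Proof. destruct J as [[c d] [e f]]; unfold mapply; cbn [fst snd]; f_equal; ring. Qed.

Lemma mapply_id w : mapply mat_id w = w.
Proof. destruct w as [w1 w2]; unfold mapply, mat_id; cbn [fst snd]; f_equal; ring. Qed.

Definition expands (c : R) (J : mat) : Prop := forall w, c * norm2 w <= norm2 (mapply J w).

Lemma expands_mul a b A B : 0 <= a -> expands a A -> expands b B -> expands (a * b) (mat_mul A B).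
Proof.
  intros Ha HA HB w; rewrite mapply_mul, Rmult_assoc.
  apply (Rle_trans _ (a * norm2 (mapply B w))); [apply Rmult_le_compat_l|]; auto.
Qed.

Lemma expands_id : expands 1 mat_id.
Proof. intros w; rewrite mapply_id; lra. Qed.

Lemma expands_scalar c : 0 <= c -> expands c ((c, 0), (0, c)).
Proof.
  intros Hc [w1 w2]; unfold mapply; cbn [fst snd].
  replace (c * w1 + 0 * w2) with (c * w1) by ring; replace (0 * w1 + c * w2) with (c * w2) by ring.
  rewrite norm2_scale, Rabs_right by lra; lra.
Qed.

Definition upper_triangular_pos (J : mat) : Prop := fst (snd J) = 0 /\ 0 < fst (fst J).

Lemma upper_triangular_pos_mul A B :
  upper_triangular_pos A -> upper_triangular_pos B -> upper_triangular_pos (mat_mul A B).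
Proof.
  destruct A as [[a b] [c d]], B as [[a' b'] [c' d']].
  unfold upper_triangular_pos, mat_mul; cbn [fst snd].
  intros [-> Ha] [-> Hb]; split; [ring | nra].
Qed.

Lemma mapply_eq_of_two_dirs A B s d :
  s <> 0 -> d <> 0 -> mapply A (s, 0) = mapply B (s, 0) -> mapply A (s, d) = mapply B (s, d) ->
  forall w, mapply A w = mapply B w.
Proof.
  destruct A as [[a b] [c e]], B as [[a' b'] [c' e']]; unfold mapply; cbn [fst snd].
  intros Hs Hd H0 H1 [w1 w2]; injection H0; injection H1; intros.
  assert (a = a') by (apply (Rmult_eq_reg_r s); lra).
  assert (c = c') by (apply (Rmult_eq_reg_r s); lra); subst a' c'.
  assert (b = b') by (apply (Rmult_eq_reg_r d); lra).
  assert (e = e') by (apply (Rmult_eq_reg_r d); lra); now subst.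
Qed.

Definition has_jacobian (g : pt -> pt) (p : pt) (J : mat) : Prop :=
  differentiable_pt_lim (fun a b => fst (g (a, b))) (fst p) (snd p) (fst (fst J)) (snd (fst J)) /\
  differentiable_pt_lim (fun a b => snd (g (a, b))) (fst p) (snd p) (fst (snd J)) (snd (snd J)).

Lemma has_jacobian_ext g1 g2 p J :
  locally_2d (fun a b => g1 (a, b) = g2 (a, b)) (fst p) (snd p) ->
  has_jacobian g1 p J -> has_jacobian g2 p J.
Proof.
  intros [del Hdel] [H1 H2]; split; eapply differentiable_pt_lim_ext; try eassumption;
    exists del; intros a b Ha Hb; now rewrite (Hdel a b Ha Hb).
Qed.

Lemma differentiable_pt_lim_affine a b c x y :
  differentiable_pt_lim (fun u v => a * u + b * v + c) x y a b.
Proof.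
  intros eps; exists (mkposreal 1 Rlt_0_1); intros u v _ _.
  replace (a * u + b * v + c - (a * x + b * y + c) - (a * (u - x) + b * (v - y))) with 0 by ring.
  rewrite Rabs_R0; apply Rmult_le_pos; [apply Rlt_le, cond_pos|].
  apply (Rle_trans _ _ _ (Rabs_pos _) (Rmax_l _ _)).
Qed.

Lemma has_jacobian_scalar_affine c x0 t0 p :
  has_jacobian (fun q => (c * fst q + x0, c * snd q + t0)) p ((c, 0), (0, c)).
Proof.
  split; cbn [fst snd]; eapply differentiable_pt_lim_ext;
    [| apply (differentiable_pt_lim_affine c 0 x0) | | apply (differentiable_pt_lim_affine 0 c t0)];
    exists (mkposreal 1 Rlt_0_1); intros; cbn [fst snd]; ring.
Qed.

Lemma differentiable_pt_lim_mult a0 b0 : differentiable_pt_lim (fun a b => a * b) a0 b0 b0 a0.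
Proof.
  intros eps; exists eps; intros a b Ha Hb.
  replace (a * b - a0 * b0 - (b0 * (a - a0) + a0 * (b - b0))) with ((a - a0) * (b - b0)) by ring.
  rewrite Rabs_mult; pose proof (Rmax_l (Rabs (a - a0)) (Rabs (b - b0))).
  pose proof (Rabs_pos (a - a0)); pose proof (Rabs_pos (b - b0)); nra.
Qed.

Lemma differentiable_of_partials u ux ut x0 t0 :
  is_dx u ux -> is_dt u ut -> cont2 ux -> differentiable_pt_lim u x0 t0 (ux x0 t0) (ut x0 t0).
Proof.
  intros Hx Ht Hc eps.
  assert (Heps2 : 0 < eps / 2) by (pose proof (cond_pos eps); lra).
  destruct (Hc x0 t0 (eps / 2) Heps2) as [del1 [Hdel1 Hc1]].
  destruct (Ht x0 t0 (eps / 2) Heps2) as [del2 Hdel2].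
  exists (mkposreal _ (Rmin_pos del1 del2 Hdel1 (cond_pos del2))).
  intros x t Hxx Htt; simpl in Hxx, Htt.
  pose proof (Rmin_l del1 del2); pose proof (Rmin_r del1 del2).
  assert (Hdx : Rabs (u x t - u x0 t - ux x0 t0 * (x - x0)) <= eps / 2 * Rabs (x - x0)).
  { replace (u x t - u x0 t - ux x0 t0 * (x - x0))
      with ((u x t - ux x0 t0 * x) - (u x0 t - ux x0 t0 * x0)) by ring.
    apply (bounded_variation (fun s => u s t - ux x0 t0 * s) (fun s => ux s t - ux x0 t0)).
    intros s Hs; split.
    - apply is_derive_Reals; replace (ux s t - ux x0 t0) with (ux s t - ux x0 t0 * 1) by ring.
      apply (derivable_pt_lim_minus (fun s => u s t) (fun s => ux x0 t0 * s)); [apply Hx|].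
      apply (derivable_pt_lim_scal (fun s => s)), derivable_pt_lim_id.
    - apply Rlt_le, Hc1; lra. }
  assert (Hdt : Rabs (u x0 t - u x0 t0 - ut x0 t0 * (t - t0)) <= eps / 2 * Rabs (t - t0)).
  { destruct (Req_dec t t0) as [->|Hne].
    - rewrite !Rminus_diag, Rmult_0_r, Rminus_0_r, Rabs_R0; lra.
    - specialize (Hdel2 (t - t0) ltac:(lra) ltac:(lra)).
      replace (t0 + (t - t0)) with t in Hdel2 by ring.
      replace (u x0 t - u x0 t0 - ut x0 t0 * (t - t0))
        with (((u x0 t - u x0 t0) / (t - t0) - ut x0 t0) * (t - t0)) by (field; lra).
      rewrite Rabs_mult; apply Rmult_le_compat_r; [apply Rabs_pos | simpl in Hdel2; lra]. }
  replace (u x t - u x0 t0 - (ux x0 t0 * (x - x0) + ut x0 t0 * (t - t0)))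
    with ((u x t - u x0 t - ux x0 t0 * (x - x0)) + (u x0 t - u x0 t0 - ut x0 t0 * (t - t0))) by ring.
  eapply Rle_trans; [apply Rabs_triang|].
  pose proof (Rmax_l (Rabs (x - x0)) (Rabs (t - t0))).
  pose proof (Rmax_r (Rabs (x - x0)) (Rabs (t - t0))).
  pose proof (cond_pos eps); nra.
Qed.

Lemma has_jacobian_comp f g p A B :
  has_jacobian g p B -> has_jacobian f (g p) A -> has_jacobian (fun q => f (g q)) p (mat_mul A B).
Proof.
  destruct p as [x y], A as [[a b] [c d]], B as [[a' b'] [c' d']].
  intros [Hg1 Hg2] [Hf1 Hf2]; cbn [fst snd] in *.
  split; cbn [fst snd mat_mul]; eapply differentiable_pt_lim_ext;
    [| exact (differentiable_pt_lim_comp _ _ _ x y _ _ _ _ _ _ Hf1 Hg1 Hg2)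
     | | exact (differentiable_pt_lim_comp _ _ _ x y _ _ _ _ _ _ Hf2 Hg1 Hg2)];
    exists (mkposreal 1 Rlt_0_1); intros u v _ _; now rewrite <- surjective_pairing.
Qed.

Fixpoint jacobian_prod (A : pt -> mat) (g : pt -> pt) (p : pt) (k : nat) : mat :=
  match k with
  | O => mat_id
  | S k => mat_mul (A (Nat.iter k g p)) (jacobian_prod A g p k)
  end.

Lemma has_jacobian_iter A g p n :
  (forall k, (k < n)%nat -> has_jacobian g (Nat.iter k g p) (A (Nat.iter k g p))) ->
  has_jacobian (Nat.iter n g) p (jacobian_prod A g p n).
Proof.
  induction n as [|n IH]; intros HA.
  - eapply has_jacobian_ext; [| apply (has_jacobian_scalar_affine 1 0 0 p)].
    exists (mkposreal 1 Rlt_0_1); intros; cbn; f_equal; ring.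
  - apply (has_jacobian_comp g (Nat.iter n g)); [apply IH; intros k Hk|]; apply HA; lia.
Qed.

Lemma has_derivative_within_of_jacobian S g p J :
  has_jacobian g p J -> has_derivative_within S g p J.
Proof.
  destruct p as [x y], J as [[a b] [c d]]; intros [H1 H2] eps Heps; cbn [fst snd] in H1, H2.
  destruct (H1 (mkposreal (eps / 2) ltac:(lra))) as [d1 Hd1].
  destruct (H2 (mkposreal (eps / 2) ltac:(lra))) as [d2 Hd2].
  exists (Rmin d1 d2); split; [apply Rmin_pos; apply cond_pos|].
  intros [q1 q2] _ Hq; unfold psub, mapply in *; cbn [fst snd] in *.
  pose proof (Rmin_l d1 d2); pose proof (Rmin_r d1 d2).
  pose proof (abs_fst_le_norm2 (q1 - x, q2 - y)); pose proof (abs_snd_le_norm2 (q1 - x, q2 - y)).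
  assert (Hmax : Rmax (Rabs (q1 - x)) (Rabs (q2 - y)) <= norm2 (q1 - x, q2 - y))
    by (apply Rmax_lub; assumption).
  cbn [fst snd] in *.
  specialize (Hd1 q1 q2 ltac:(lra) ltac:(lra)); specialize (Hd2 q1 q2 ltac:(lra) ltac:(lra)).
  simpl in Hd1, Hd2.
  eapply Rle_trans; [apply norm2_le_abs_sum|]; nra.
Qed.

(** * One-sided limits along rays *)

Definition ray (p w : pt) (h : R) : pt := (fst p + h * fst w, snd p + h * snd w).

Lemma has_jacobian_ray g p J w : has_jacobian g p J ->
  derivable_pt_lim (fun h => fst (g (ray p w h))) 0 (fst (mapply J w)) /\
  derivable_pt_lim (fun h => snd (g (ray p w h))) 0 (snd (mapply J w)).
Proof.
  destruct p as [x y], J as [[a b] [c d]], w as [s e]; intros [H1 H2]; cbn [fst snd] in *.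
  assert (Hline : forall z v, derivable_pt_lim (fun h => z + h * v) 0 v)
    by (intros z v; apply is_derive_Reals; auto_derive; [easy | ring]).
  replace x with (x + 0 * s) in H1, H2 by ring; replace y with (y + 0 * e) in H1, H2 by ring.
  unfold ray, mapply; cbn [fst snd]; split.
  - exact (derivable_pt_lim_comp_2d _ (fun h => x + h * s) (fun h => y + h * e) 0 _ _ _ _
             H1 (Hline x s) (Hline y e)).
  - exact (derivable_pt_lim_comp_2d _ (fun h => x + h * s) (fun h => y + h * e) 0 _ _ _ _
             H2 (Hline x s) (Hline y e)).
Qed.

Lemma psub_ray p w h : psub (ray p w h) p = (h * fst w, h * snd w).
Proof. unfold psub, ray; cbn [fst snd]; f_equal; ring. Qed.

Lemma ray_0 p w : ray p w 0 = p.
Proof. destruct p; unfold ray; cbn [fst snd]; f_equal; ring. Qed.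

Lemma at_right_gt0 : at_right 0 (fun h => 0 < h).
Proof. exists (mkposreal 1 Rlt_0_1); now intros h _ Hh. Qed.

Lemma at_right_lt c : 0 < c -> at_right 0 (fun h => h < c).
Proof.
  intros Hc; exists (mkposreal c Hc); intros h Hball _.
  change (Rabs (h - 0) < c) in Hball; apply Rabs_def2 in Hball; lra.
Qed.

Lemma at_right_mul_lt a c : 0 <= a -> 0 < c -> at_right 0 (fun h => h * a < c).
Proof.
  intros Ha Hc; apply (filter_imp (fun h => 0 < h /\ h < c / (a + 1))).
  - intros h [Hh Hlt]; apply (Rmult_lt_compat_r (a + 1)) in Hlt; [|lra].
    replace (c / (a + 1) * (a + 1)) with c in Hlt by (field; lra); nra.
  - apply filter_and; [apply at_right_gt0 | apply at_right_lt, Rdiv_lt_0_compat; lra].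
Qed.

Lemma at_right_forall_lt (P : nat -> R -> Prop) n :
  (forall k, (k < n)%nat -> at_right 0 (P k)) ->
  at_right 0 (fun h => forall k, (k < n)%nat -> P k h).
Proof.
  induction n as [|n IH]; intros HP.
  - apply filter_forall; intros h k Hk; lia.
  - apply (filter_imp (fun h => (forall k, (k < n)%nat -> P k h) /\ P n h)).
    + intros h [Hlt Hn] k Hk; destruct (Nat.eq_dec k n) as [->|]; auto; apply Hlt; lia.
    + apply filter_and; [apply IH; intros k Hk|]; apply HP; lia.
Qed.

Lemma at_right_taylor f l eps : derivable_pt_lim f 0 l -> 0 < eps ->
  at_right 0 (fun h => Rabs (f h - f 0 - l * h) <= eps * h).
Proof.
  intros Hf Heps; destruct (Hf eps Heps) as [del Hdel].
  exists del; intros h Hball Hh; change (Rabs (h - 0) < del) in Hball; rewrite Rminus_0_r in Hball.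
  specialize (Hdel h ltac:(lra) Hball); rewrite Rplus_0_l in Hdel.
  replace (f h - f 0 - l * h) with (((f h - f 0) / h - l) * h) by (field; lra).
  rewrite Rabs_mult, (Rabs_right h) by lra; apply Rmult_le_compat_r; lra.
Qed.

Lemma at_right_continuity f l r : derivable_pt_lim f 0 l -> 0 < r ->
  at_right 0 (fun h => Rabs (f h - f 0) < r).
Proof.
  intros Hf Hr; pose proof (Rabs_pos l).
  apply (filter_imp (fun h => 0 < h /\ Rabs (f h - f 0 - l * h) <= 1 * h /\ h < r / (Rabs l + 1))).
  - intros h (Hh & Htay & Hsmall).
    apply (Rmult_lt_compat_r (Rabs l + 1)) in Hsmall; [|lra].
    replace (r / (Rabs l + 1) * (Rabs l + 1)) with r in Hsmall by (field; lra).
    replace (f h - f 0) with ((f h - f 0 - l * h) + l * h) by ring.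
    eapply Rle_lt_trans; [apply Rabs_triang|]; rewrite Rabs_mult, (Rabs_right h) by lra; nra.
  - repeat apply filter_and; [apply at_right_gt0 | apply at_right_taylor; auto; lra |].
    apply at_right_lt, Rdiv_lt_0_compat; lra.
Qed.

Lemma has_jacobian_ray_taylor g p J w eps : has_jacobian g p J -> 0 < eps ->
  at_right 0 (fun h =>
    Rabs (fst (g (ray p w h)) - fst (g p) - fst (mapply J w) * h) <= eps * h /\
    Rabs (snd (g (ray p w h)) - snd (g p) - snd (mapply J w) * h) <= eps * h).
Proof.
  intros HJ Heps; destruct (has_jacobian_ray g p J w HJ) as [H1 H2].
  replace (g p) with (g (ray p w 0)) by now rewrite ray_0.
  apply filter_and; apply at_right_taylor; assumption.
Qed.

Lemma has_jacobian_ray_continuity g p J w r : has_jacobian g p J -> 0 < r ->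
  at_right 0 (fun h => Rabs (fst (g (ray p w h)) - fst (g p)) < r /\
                       Rabs (snd (g (ray p w h)) - snd (g p)) < r).
Proof.
  intros HJ Hr; destruct (has_jacobian_ray g p J w HJ) as [H1 H2].
  replace (g p) with (g (ray p w 0)) by now rewrite ray_0.
  apply filter_and; eapply at_right_continuity; eassumption.
Qed.

(** * The lift of f and the region Y *)

Definition to_M (p : pt) : pt := (fst p, frac (snd p)).

Lemma to_M_id p : 0 <= snd p < 1 -> to_M p = p.
Proof. destruct p as [x t]; unfold to_M; cbn [fst snd]; intros Ht; now rewrite frac_id. Qed.

Lemma mdiff_to_M q q' : Rabs (snd q - snd q') < 1/2 -> mdiff (to_M q) (to_M q') = psub q q'.
Proof. intros Hq; unfold mdiff, to_M, psub; cbn [fst snd]; now rewrite twrap_frac_sub. Qed.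

Section Lift.

Variables (gam : R) (u : R -> R -> R).
Hypothesis u_periodic : forall x t, u x (t + 1) = u x t.

Definition lift (p : pt) : pt := (f1 gam u (fst p) (snd p), 4 * snd p).

Lemma f1_periodic x t : f1 gam u x (t + 1) = f1 gam u x t.
Proof. unfold f1, f1_left; now rewrite u_periodic. Qed.

Lemma iter_fmap_to_M k p : Nat.iter k (fmap gam u) (to_M p) = to_M (Nat.iter k lift p).
Proof.
  induction k as [|k IH]; [reflexivity|]; rewrite !Nat.iter_succ, IH.
  destruct (Nat.iter k lift p) as [x t]; unfold fmap, lift, to_M; cbn [fst snd]; f_equal.
  - apply (periodic_frac (f1 gam u x)), f1_periodic.
  - unfold frac at 2; replace (4 * (t - IZR (Int_part t))) with (4 * t + IZR (- (4 * Int_part t)))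
      by (rewrite opp_IZR, mult_IZR; ring).
    apply frac_add_IZR.
Qed.

Lemma snd_iter_lift k p : snd (Nat.iter k lift p) = 4 ^ k * snd p.
Proof.
  induction k as [|k IH]; [cbn; ring|].
  rewrite Nat.iter_succ; cbn [pow snd lift]; rewrite IH; ring.
Qed.

Lemma fst_iter_lift_1 k p : fst p = 1 -> fst (Nat.iter k lift p) = 1.
Proof.
  intros Hp; induction k as [|k IH]; [assumption|]; rewrite Nat.iter_succ; cbn [fst lift].
  rewrite IH; unfold f1; destruct Rle_dec; lra.
Qed.

(* Over the circle point theta = frac t, the strip X_i reaches up to f_1(3/4, (i + theta)/4). *)
Definition Y_height (t : R) : R :=
  Rmax (Rmax (f1_left gam u (3/4) (t / 4)) (f1_left gam u (3/4) ((1 + t) / 4)))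
       (Rmax (f1_left gam u (3/4) ((2 + t) / 4)) (f1_left gam u (3/4) ((3 + t) / 4))).

Lemma Y_height_periodic t : Y_height (t + 1) = Y_height t.
Proof.
  unfold Y_height.
  replace ((3 + (t + 1)) / 4) with (t / 4 + 1) by field; unfold f1_left at 4; rewrite u_periodic.
  replace ((t + 1) / 4) with ((1 + t) / 4) by field.
  replace ((1 + (t + 1)) / 4) with ((2 + t) / 4) by field.
  replace ((2 + (t + 1)) / 4) with ((3 + t) / 4) by field.
  fold (f1_left gam u (3/4) (t / 4)); unfold Rmax; repeat destruct Rle_dec; lra.
Qed.

Lemma Y_height_ge t : f1_left gam u (3/4) (t / 4) <= Y_height t.
Proof. apply le_Rmax4; now left. Qed.

Lemma inY_to_M q : inY gam u (to_M q) <-> 3/4 <= fst q <= 1 /\ fst q <= Y_height (snd q).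
Proof.
  destruct q as [x t]; unfold inY, inX, inM, to_M; cbn [fst snd].
  rewrite <- (periodic_frac Y_height Y_height_periodic t); pose proof (frac_bounds t).
  unfold f1; destruct Rle_dec; [|lra].
  unfold Y_height; rewrite le_Rmax4; split.
  - intros (Hx & _ & i & Hi & _ & Hle); split; [assumption|].
    destruct i as [|[|[|[|i]]]]; cbn [INR] in Hle; try lia;
      [left | right; left | right; right; left | right; right; right];
      (eapply Rle_trans; [exact Hle | right; f_equal; field]).
  - intros [Hx Hle]; split; [assumption|]; split; [split; split; lra|].
    destruct Hle as [Hle|[Hle|[Hle|Hle]]]; [exists 0%nat | exists 1%nat | exists 2%nat | exists 3%nat];
      (split; [lia|]); cbn [INR]; (split; [lra|]);
      (eapply Rle_trans; [exact Hle | right; f_equal; field]).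
Qed.

Lemma Y_height_lipschitz ut B : is_dt u ut -> (forall t, Rabs (ut (3/4) t) <= B) ->
  exists K, 0 <= K /\ forall t t', Rabs (Y_height t' - Y_height t) <= K * Rabs (t' - t).
Proof.
  intros Hdt HB; set (r := rpow (3/4) gam).
  assert (HB0 : 0 <= B) by (specialize (HB 0); pose proof (Rabs_pos (ut (3/4) 0)); lra).
  set (K := 3/4 * Rabs r * B); assert (HK : 0 <= K) by (pose proof (Rabs_pos r); unfold K; nra).
  exists K; split; [assumption|].
  assert (Hg : forall a b, Rabs (f1_left gam u (3/4) b - f1_left gam u (3/4) a) <= K * Rabs (b - a)).
  { intros a b; apply (bounded_variation _ (fun t => 3/4 * (0 + r * ut (3/4) t))); intros t _; split.
    - apply is_derive_Reals, (derivable_pt_lim_scal (fun t => 1 + r * u (3/4) t)),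
        (derivable_pt_lim_plus (fun _ => 1) (fun t => r * u (3/4) t));
        [apply derivable_pt_lim_const | apply (derivable_pt_lim_scal (fun t => u (3/4) t)), Hdt].
    - rewrite Rplus_0_l, !Rabs_mult, (Rabs_right (3/4)) by lra; unfold K.
      pose proof (Rabs_pos r); specialize (HB t); nra. }
  assert (Hshift : forall c t t',
    Rabs (f1_left gam u (3/4) ((c + t') / 4) - f1_left gam u (3/4) ((c + t) / 4))
                                  <= K * Rabs (t' - t)).
  { intros c t t'; eapply Rle_trans; [apply Hg|]; apply Rmult_le_compat_l; [assumption|].
    replace ((c + t') / 4 - (c + t) / 4) with ((t' - t) * / 4) by field.
    rewrite Rabs_mult, (Rabs_right (/ 4)) by lra; pose proof (Rabs_pos (t' - t)); lra. }
  intros t t'; unfold Y_height; repeat apply Rabs_Rmax_sub; try apply Hshift.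
  replace (t' / 4) with ((0 + t') / 4) by field; replace (t / 4) with ((0 + t) / 4) by field.
  apply Hshift.
Qed.

End Lift.

(** * The first return map *)

Definition F_derivative_estimate (gam : R) (u : R -> R -> R) (p : pt) (np : nat) (L : mat) : Prop :=
  forall eps, 0 < eps -> exists del, 0 < del /\
    forall (q : pt) (m : nat), inM q -> norm2 (mdiff q p) < del -> first_return gam u q m ->
      norm2 (psub (mdiff (Nat.iter m (fmap gam u) q) (Nat.iter np (fmap gam u) p))
                  (mapply L (mdiff q p)))
        <= eps * norm2 (mdiff q p).

Lemma F_has_derivative_fst_gt_34 gam u p L :
  inY gam u p -> F_has_derivative gam u p L -> 3/4 < fst p.
Proof.
  intros [[Hx _] [[_ Ht] _]] (n & _ & (r & Hr & Hnbhd) & _).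
  destruct (Req_dec (fst p) (3/4)) as [E|]; [exfalso|lra].
  assert (He : exists e, 0 < e < r /\ e <= 1/4).
  { exists (Rmin r (1/2) / 2); pose proof (Rmin_l r (1/2)); pose proof (Rmin_r r (1/2)).
    pose proof (Rmin_pos r (1/2) Hr ltac:(lra)); lra. }
  destruct He as (e & He & He4).
  assert (Hin : inY gam u (fst p - e, snd p)).
  { apply Hnbhd; [unfold inM; cbn [fst snd]; split; split; lra|].
    unfold mdiff; cbn [fst snd]; rewrite Rminus_diag, twrap_id by lra.
    eapply Rle_lt_trans; [apply norm2_le_abs_sum|].
    replace (fst p - e - fst p) with (- e) by ring; rewrite Rabs_Ropp, Rabs_R0, Rabs_right; lra. }
  destruct Hin as [Hq _]; cbn [fst] in Hq; lra.
Qed.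

Section ReturnMap.

Variables (gam : R) (u ux ut : R -> R -> R).
Hypotheses (gam_pos : 0 < gam) (u_periodic : forall x t, u x (t + 1) = u x t)
  (u_dx : is_dx u ux) (u_dt : is_dt u ut) (ux_cont : cont2 ux)
  (u_pos : forall x t, 0 <= x <= 3/4 -> 0 < u x t)
  (f1_left_le_1 : forall x t, 0 <= x <= 3/4 -> f1_left gam u x t <= 1)
  (f1_left_34 : forall t, 15/16 < f1_left gam u (3/4) t)
  (x_ux_small : forall x t, 0 <= x <= 3/4 -> Rabs (x * ux x t) <= 1/2)
  (ut_small : forall x t, 0 <= x <= 3/4 -> Rabs (ut x t) <= 1/2)
  (left_expanding : forall (p : pt) (L : mat), left_strip p ->
     has_derivative_within left_strip (flift gam u) p L -> forall v, norm2 v <= norm2 (mapply L v)).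

Notation lift := (lift gam u).
Notation Y_height := (Y_height gam u).

Definition dx_f1_left (x t : R) : R :=
  1 + u x t * (Rpower x gam + x * (gam * Rpower x (gam - 1))) + x * Rpower x gam * ux x t.

Definition dt_f1_left (x t : R) : R := x * Rpower x gam * ut x t.

Definition left_jacobian (q : pt) : mat :=
  ((dx_f1_left (fst q) (snd q), dt_f1_left (fst q) (snd q)), (0, 4)).

(* At x = 3/4, where f is not differentiable, the value is never used. *)
Definition lift_jacobian (q : pt) : mat :=
  if Rlt_dec (fst q) (3/4) then left_jacobian q else ((4, 0), (0, 4)).

Lemma flift_has_jacobian q : 0 < fst q -> has_jacobian (flift gam u) q (left_jacobian q).
Proof.
  destruct q as [x0 t0]; cbn [fst snd]; intros Hx0; split; cbn [fst snd left_jacobian].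
  - assert (Hw : derivable_pt_lim (fun x => x * Rpower x gam) x0
                   (1 * Rpower x0 gam + x0 * (gam * Rpower x0 (gam - 1))))
      by exact (derivable_pt_lim_mult id _ x0 _ _ (derivable_pt_lim_id x0)
                  (derivable_pt_lim_power x0 gam Hx0)).
    pose proof (differentiable_pt_lim_comp (fun a b => a * b) (fun x _ => x * Rpower x gam) u x0 t0
      _ _ _ _ _ _ (differentiable_pt_lim_mult _ _) (differentiable_pt_lim_proj1_0 _ x0 t0 _ Hw)
      (differentiable_of_partials u ux ut x0 t0 u_dx u_dt ux_cont)) as Hprod.
    pose proof (differentiable_pt_lim_comp (fun a b => 1 * a + 1 * b + 0) (fun x t => 1 * x + 0 * t + 0)
      _ x0 t0 _ _ _ _ _ _ (differentiable_pt_lim_affine _ _ _ _ _)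
      (differentiable_pt_lim_affine _ _ _ _ _)
      Hprod) as Hsum.
    replace (dx_f1_left x0 t0) with (1 * 1 + 1 * (u x0 t0 * (1 * Rpower x0 gam
      + x0 * (gam * Rpower x0 (gam - 1))) + x0 * Rpower x0 gam * ux x0 t0))
      by (unfold dx_f1_left; ring).
    replace (dt_f1_left x0 t0) with (1 * 0 + 1 * (u x0 t0 * 0 + x0 * Rpower x0 gam * ut x0 t0))
      by (unfold dt_f1_left; ring).
    eapply differentiable_pt_lim_ext; [| exact Hsum].
    exists (mkposreal x0 Hx0); intros a b Ha _; simpl in Ha; apply Rabs_def2 in Ha.
    unfold flift, f1_left, rpow; cbn [fst snd]; destruct Rlt_dec; [ring | lra].
  - eapply differentiable_pt_lim_ext; [| apply (differentiable_pt_lim_affine 0 4 0)].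
    exists (mkposreal 1 Rlt_0_1); intros; unfold flift; cbn [fst snd]; ring.
Qed.

Lemma lift_has_jacobian q : 0 < fst q -> fst q <> 3/4 -> has_jacobian lift q (lift_jacobian q).
Proof.
  intros Hpos Hne; unfold lift_jacobian; destruct Rlt_dec as [Hlt|Hge].
  - apply (has_jacobian_ext (flift gam u)); [| now apply flift_has_jacobian].
    exists (mkposreal _ (Rmin_pos (fst q) (3/4 - fst q) Hpos ltac:(lra))); intros a b Ha _; simpl in Ha.
    pose proof (Rmin_r (fst q) (3/4 - fst q)); apply Rabs_def2 in Ha.
    unfold flift, lift, f1; cbn [fst snd]; destruct Rle_dec; [reflexivity | lra].
  - apply (has_jacobian_ext (fun q => (4 * fst q + -3, 4 * snd q + 0)));
      [| apply has_jacobian_scalar_affine].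
    exists (mkposreal (fst q - 3/4) ltac:(lra)); intros a b Ha _; simpl in Ha; apply Rabs_def2 in Ha.
    unfold lift, f1; cbn [fst snd]; destruct Rle_dec; [lra | f_equal; ring].
Qed.

Lemma lift_jacobian_expands q : 0 < fst q -> fst q <> 3/4 -> expands 1 (lift_jacobian q).
Proof.
  intros Hpos Hne; unfold lift_jacobian; destruct Rlt_dec as [Hlt|Hge].
  - intros w; rewrite Rmult_1_l; apply (left_expanding q); [unfold left_strip; lra |].
    now apply has_derivative_within_of_jacobian, flift_has_jacobian.
  - intros w; eapply Rle_trans; [| apply expands_scalar; lra].
    pose proof (sqrt_pos (fst w ^ 2 + snd w ^ 2)); unfold norm2; lra.
Qed.

Lemma lift_jacobian_upper_triangular q : 0 < fst q -> upper_triangular_pos (lift_jacobian q).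
Proof.
  intros Hpos; unfold lift_jacobian, left_jacobian, upper_triangular_pos; destruct Rlt_dec as [Hlt|Hge];
    cbn [fst snd]; split; try lra.
  set (x := fst q); set (t := snd q); fold x in Hpos, Hlt; unfold dx_f1_left.
  assert (Hpow : 0 < Rpower x gam <= 1).
  { split; [apply exp_pos|].
    replace 1 with (Rpower 1 gam) by (unfold Rpower; rewrite ln_1, Rmult_0_r; apply exp_0).
    apply Rle_Rpower_l; lra. }
  pose proof (exp_pos ((gam - 1) * ln x)); fold (Rpower x (gam - 1)) in *.
  pose proof (u_pos x t ltac:(lra)); pose proof (x_ux_small x t ltac:(lra)) as Hsmall.
  apply Rabs_le_between in Hsmall.
  replace (x * Rpower x gam * ux x t) with (Rpower x gam * (x * ux x t)) by ring.
  assert (0 < u x t * (Rpower x gam + x * (gam * Rpower x (gam - 1)))).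
  { apply Rmult_lt_0_compat; [assumption|].
    assert (0 < x * (gam * Rpower x (gam - 1))) by (apply Rmult_lt_0_compat; nra); lra. }
  nra.
Qed.

Lemma Y_height_le_1 t : Y_height t <= 1.
Proof. unfold Y_height, Rmax; repeat destruct Rle_dec; apply f1_left_le_1; lra. Qed.

Lemma Y_height_gt t : 15/16 < Y_height t.
Proof. eapply Rlt_le_trans; [apply f1_left_34 | apply Y_height_ge]. Qed.

Lemma not_inY_cases q : ~ inY gam u (to_M q) -> fst q < 3/4 \/ Y_height (snd q) < fst q.
Proof.
  rewrite (inY_to_M gam u u_periodic); intros Hnot; pose proof (Y_height_le_1 (snd q)).
  destruct (Rlt_le_dec (fst q) (3/4)); [now left|]; right.
  destruct (Rlt_le_dec (Y_height (snd q)) (fst q)); [assumption|].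
  exfalso; apply Hnot; split; [split|]; lra.
Qed.

Lemma not_inY_stable q : ~ inY gam u (to_M q) ->
  exists r, 0 < r /\ forall q', Rabs (fst q' - fst q) < r -> Rabs (snd q' - snd q) < r ->
                                ~ inY gam u (to_M q').
Proof.
  intros Hq; destruct (Y_height_lipschitz gam u ut (1/2) u_dt) as [K [HK Hlip]].
  { intros t; apply ut_small; lra. }
  destruct (not_inY_cases q Hq) as [Hleft|Habove].
  - exists (3/4 - fst q); split; [lra|]; intros q' Hx _.
    rewrite (inY_to_M gam u u_periodic); intros [[Hx' _] _]; apply Rabs_def2 in Hx; lra.
  - set (gap := fst q - Y_height (snd q)).
    exists (gap / (2 * (K + 1))); split; [unfold gap; apply Rdiv_lt_0_compat; lra|].
    intros q' Hx Ht; rewrite (inY_to_M gam u u_periodic); intros [_ Hle].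
    assert (Hr : gap / (2 * (K + 1)) * (K + 1) = gap / 2) by (field; lra).
    specialize (Hlip (snd q) (snd q')); apply Rabs_le_between in Hlip; apply Rabs_def2 in Hx.
    pose proof (Rabs_pos (snd q' - snd q)).
    assert (K * Rabs (snd q' - snd q) <= K * (gap / (2 * (K + 1)))) by (apply Rmult_le_compat_l; lra).
    unfold gap in *; nra.
Qed.

Lemma f1_pos x t : 0 < x -> 0 < f1 gam u x t.
Proof.
  intros Hx; unfold f1, f1_left, rpow; destruct Rle_dec; [|lra]; destruct Rlt_dec; [|lra].
  pose proof (exp_pos (gam * ln x)); fold (Rpower x gam) in *; pose proof (u_pos x t ltac:(lra)).
  apply Rmult_lt_0_compat; nra.
Qed.

Section Orbit.

Variables (p : pt) (n : nat).
Hypotheses (p_M : inM p) (p_right : 3/4 < fst p) (p_return : first_return gam u p n).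

Lemma orbit_not_inY k : (1 <= k)%nat -> (k < n)%nat -> ~ inY gam u (to_M (Nat.iter k lift p)).
Proof.
  destruct p_return as (_ & _ & Hnot); intros Hk1 Hkn.
  rewrite <- (iter_fmap_to_M gam u u_periodic), (to_M_id p (proj2 p_M)); auto.
Qed.

Lemma orbit_returns : inY gam u (to_M (Nat.iter n lift p)).
Proof.
  destruct p_return as (_ & HY & _).
  now rewrite <- (iter_fmap_to_M gam u u_periodic), (to_M_id p (proj2 p_M)).
Qed.

Lemma orbit_pos k : 0 < fst (Nat.iter k lift p).
Proof.
  induction k as [|k IH]; [cbn; lra|]; rewrite Nat.iter_succ; now apply f1_pos.
Qed.

Lemma orbit_ne_34 k : (k < n)%nat -> fst (Nat.iter k lift p) <> 3/4.
Proof.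
  intros Hk; destruct k as [|k]; [cbn; lra|].
  destruct (not_inY_cases _ (orbit_not_inY (S k) ltac:(lia) Hk)) as [H|H]; [lra|].
  pose proof (Y_height_gt (snd (Nat.iter (S k) lift p))); lra.
Qed.

Definition orbit_jacobian (k : nat) : mat := jacobian_prod lift_jacobian lift p k.

Lemma orbit_has_jacobian k : (k <= n)%nat -> has_jacobian (Nat.iter k lift) p (orbit_jacobian k).
Proof.
  intros Hk; apply has_jacobian_iter; intros j Hj.
  apply lift_has_jacobian; [apply orbit_pos | apply orbit_ne_34; lia].
Qed.

Lemma orbit_jacobian_upper_triangular k : upper_triangular_pos (orbit_jacobian k).
Proof.
  induction k as [|k IH]; [split; cbn; lra|].
  apply upper_triangular_pos_mul; [apply lift_jacobian_upper_triangular, orbit_pos | assumption].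
Qed.

(* The first step is taken from the right branch and expands by 4; later steps expand weakly. *)
Lemma orbit_jacobian_expands : expands 4 (orbit_jacobian n).
Proof.
  assert (Hk : forall k, (1 <= k <= n)%nat -> expands 4 (orbit_jacobian k)).
  { intros k; induction k as [|k IH]; intros Hk; [lia|].
    change (orbit_jacobian (S k)) with (mat_mul (lift_jacobian (Nat.iter k lift p)) (orbit_jacobian k)).
    destruct k as [|k].
    - unfold lift_jacobian; change (Nat.iter 0 lift p) with p; destruct Rlt_dec; [lra|].
      pose proof (expands_mul 4 1 _ _ ltac:(lra) (expands_scalar 4 ltac:(lra)) expands_id) as H.
      now rewrite Rmult_1_r in H.
    - pose proof (expands_mul 1 4 _ _ ltac:(lra)
        (lift_jacobian_expands _ (orbit_pos _) (orbit_ne_34 (S k) ltac:(lia))) (IH ltac:(lia))) as H.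
      now rewrite Rmult_1_l in H. }
  apply Hk; destruct p_return; lia.
Qed.

Definition returns_along (w : pt) : Prop :=
  at_right 0 (fun h => inM (to_M (ray p w h)) /\ first_return gam u (to_M (ray p w h)) n).

Lemma avoids_Y_before_return w : at_right 0 (fun h => forall k, (k < n)%nat -> (1 <= k)%nat ->
  ~ inY gam u (to_M (Nat.iter k lift (ray p w h)))).
Proof.
  apply at_right_forall_lt; intros k Hk; destruct k as [|k]; [apply filter_forall; intros; lia|].
  destruct (not_inY_stable _ (orbit_not_inY (S k) ltac:(lia) Hk)) as [r [Hr Hstable]].
  apply (filter_imp _ _ (fun h H _ => Hstable _ (proj1 H) (proj2 H))).
  exact (has_jacobian_ray_continuity _ _ _ w r (orbit_has_jacobian (S k) ltac:(lia)) Hr).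
Qed.

Lemma returns_along_of_landing w :
  at_right 0 (fun h => inM (to_M (ray p w h)) /\ inY gam u (to_M (Nat.iter n lift (ray p w h)))) ->
  returns_along w.
Proof.
  intros Hland; refine (filter_imp _ _ _ (filter_and _ _ Hland (avoids_Y_before_return w))).
  intros h [[HM HY] Havoid]; split; [assumption|]; split; [destruct p_return; lia|].
  rewrite (iter_fmap_to_M gam u u_periodic); split; [assumption|].
  intros k Hk1 Hkn; rewrite (iter_fmap_to_M gam u u_periodic); now apply Havoid.
Qed.

Lemma lands_in_Y_from_boundary d :
  fst (Nat.iter n lift p) = 3/4 ->
  Rabs (snd (fst (orbit_jacobian n)) * d) <= fst (fst (orbit_jacobian n)) / 4 ->
  at_right 0 (fun h => inM (to_M (ray p (1, d) h)) /\
                       inY gam u (to_M (Nat.iter n lift (ray p (1, d) h)))).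
Proof.
  intros HXn Hd; set (G := orbit_jacobian n) in *.
  destruct (orbit_jacobian_upper_triangular n) as [_ Hal].
  fold G in Hal; set (al := fst (fst G)) in *; set (be := snd (fst G)) in *.
  assert (Hp1 : fst p < 1).
  { destruct p_M as [[_ Hle] _]; destruct (Req_dec (fst p) 1) as [E|]; [|lra].
    rewrite (fst_iter_lift_1 gam u n p E) in HXn; lra. }
  eapply filter_imp.
  2: { apply filter_and; [apply at_right_gt0|].
       apply filter_and; [apply (at_right_lt (1 - fst p)); lra|].
       apply filter_and; [apply (has_jacobian_ray_taylor (Nat.iter n lift) p G (1, d) (al / 4))
                         | apply (has_jacobian_ray_continuity (Nat.iter n lift) p G (1, d) (1/8))];
         (apply orbit_has_jacobian; lia) || lra. }
  intros h (Hh & Hh1 & [Htaylor _] & [Hnear _]).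
  rewrite fst_mapply in Htaylor; cbn [fst snd] in Htaylor; fold al be in Htaylor.
  apply Rabs_le_between in Hd, Htaylor; apply Rabs_def2 in Hnear.
  split; [unfold inM, to_M, ray; cbn [fst snd]; pose proof (frac_bounds (snd p + h * d)); lra|].
  rewrite (inY_to_M gam u u_periodic).
  pose proof (Y_height_gt (snd (Nat.iter n lift (ray p (1, d) h)))).
  split; [split|]; nra.
Qed.

Lemma lands_in_Y_from_interior d K :
  (forall t t', Rabs (Y_height t' - Y_height t) <= K * Rabs (t' - t)) ->
  3/4 < fst (Nat.iter n lift p) ->
  Rabs (snd (fst (orbit_jacobian n)) * d) <= fst (fst (orbit_jacobian n)) / 4 ->
  K * 4 ^ n * Rabs d <= fst (fst (orbit_jacobian n)) / 4 ->
  at_right 0 (fun h => inM (to_M (ray p (-1, d) h)) /\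
                       inY gam u (to_M (Nat.iter n lift (ray p (-1, d) h)))).
Proof.
  intros Hlip HXn Hd HKd; set (G := orbit_jacobian n) in *.
  destruct (orbit_jacobian_upper_triangular n) as [_ Hal].
  fold G in Hal; set (al := fst (fst G)) in *; set (be := snd (fst G)) in *.
  set (q := Nat.iter n lift p) in *.
  pose proof orbit_returns as Hq; rewrite (inY_to_M gam u u_periodic) in Hq; fold q in Hq.
  eapply filter_imp.
  2: { apply filter_and; [apply at_right_gt0|]; apply filter_and; [apply (at_right_lt (1/4)); lra|].
       apply filter_and; [apply (has_jacobian_ray_taylor (Nat.iter n lift) p G (-1, d) (al / 4))
                         | apply (has_jacobian_ray_continuity (Nat.iter n lift) p G (-1, d)
                                                              (fst q - 3/4))];
         (apply orbit_has_jacobian; lia) || lra. }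
  intros h (Hh & Hh1 & [Htaylor _] & [Hnear _]); fold q in Htaylor, Hnear.
  set (q' := Nat.iter n lift (ray p (-1, d) h)) in *.
  rewrite fst_mapply in Htaylor; cbn [fst snd] in Htaylor; fold al be in Htaylor.
  apply Rabs_le_between in Hd, Htaylor; apply Rabs_def2 in Hnear.
  split; [unfold inM, to_M, ray; cbn [fst snd]; pose proof (frac_bounds (snd p + h * d));
          destruct p_M; lra|].
  (* the top of Y moves by at most K 4^n |d| h, while the orbit point drops by al h / 2 *)
  assert (Hshift : Rabs (snd q' - snd q) = 4 ^ n * Rabs d * h).
  { unfold q', q; rewrite !snd_iter_lift; unfold ray; cbn [fst snd].
    replace (4 ^ n * (snd p + h * d) - 4 ^ n * snd p) with ((4 ^ n * h) * d) by ring.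
    rewrite Rabs_mult, Rabs_right by (pose proof (pow_lt 4 n ltac:(lra)); nra); ring. }
  specialize (Hlip (snd q) (snd q')); rewrite Hshift in Hlip; apply Rabs_le_between in Hlip.
  assert (K * (4 ^ n * Rabs d * h) <= al / 4 * h) by nra.
  rewrite (inY_to_M gam u u_periodic); pose proof (Y_height_le_1 (snd q')).
  split; [split|]; nra.
Qed.

Lemma returns_along_two_directions :
  exists s d, s <> 0 /\ d <> 0 /\ returns_along (s, 0) /\ returns_along (s, d).
Proof.
  destruct (orbit_jacobian_upper_triangular n) as [_ Hal].
  set (al := fst (fst (orbit_jacobian n))) in *.
  set (be := snd (fst (orbit_jacobian n))).
  destruct (Y_height_lipschitz gam u ut (1/2) u_dt) as [K [HK Hlip]]; [intros; apply ut_small; lra|].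
  pose proof (pow_lt 4 n ltac:(lra)); pose proof (Rabs_pos be).
  assert (HK4 : 0 <= K * 4 ^ n) by nra.
  (* small enough that both the shear be * d and the motion of the top of Y stay below al / 4 *)
  set (d := al / (4 * (Rabs be + K * 4 ^ n + 1))).
  assert (Hd : 0 < d) by (apply Rdiv_lt_0_compat; lra).
  assert (Hsmall : forall e, e = 0 \/ e = d -> Rabs (be * e) <= al / 4 /\ K * 4 ^ n * Rabs e <= al / 4).
  { intros e He.
    assert (Habs : Rabs e <= d) by (destruct He as [->| ->]; rewrite ?Rabs_R0, ?Rabs_right; lra).
    assert (Hd4 : d * (Rabs be + K * 4 ^ n + 1) = al / 4) by (unfold d; field; lra).
    pose proof (Rabs_pos e); rewrite Rabs_mult; split; nra. }
  destruct (Req_dec (fst (Nat.iter n lift p)) (3/4)) as [Hb|Hi].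
  - exists 1, d; split; [lra|]; split; [lra|].
    split; apply returns_along_of_landing, lands_in_Y_from_boundary; try apply Hsmall; auto.
  - assert (HXn : 3/4 < fst (Nat.iter n lift p)).
    { pose proof orbit_returns as Hq; rewrite (inY_to_M gam u u_periodic) in Hq; lra. }
    exists (-1), d; split; [lra|]; split; [lra|].
    split; apply returns_along_of_landing; apply (lands_in_Y_from_interior _ K); try apply Hsmall; auto.
Qed.

Lemma chart_along_ray w h : 0 <= h -> h * (4 ^ n * Rabs (snd w)) < 1/2 ->
  mdiff (to_M (ray p w h)) p = psub (ray p w h) p /\
  mdiff (Nat.iter n (fmap gam u) (to_M (ray p w h))) (Nat.iter n (fmap gam u) p)
    = psub (Nat.iter n lift (ray p w h)) (Nat.iter n lift p).
Proof.
  intros Hh Hsmall; pose proof (pow_R1_Rle 4 n ltac:(lra)); pose proof (Rabs_pos (snd w)).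
  assert (Hp : to_M p = p) by apply (to_M_id p (proj2 p_M)).
  split.
  - transitivity (mdiff (to_M (ray p w h)) (to_M p)); [now rewrite Hp|].
    apply mdiff_to_M; unfold ray; cbn [fst snd].
    replace (snd p + h * snd w - snd p) with (h * snd w) by ring.
    rewrite Rabs_mult, (Rabs_right h) by lra; nra.
  - replace (Nat.iter n (fmap gam u) p) with (to_M (Nat.iter n lift p))
      by now rewrite <- (iter_fmap_to_M gam u u_periodic), Hp.
    rewrite (iter_fmap_to_M gam u u_periodic); apply mdiff_to_M.
    rewrite !snd_iter_lift; unfold ray; cbn [fst snd].
    replace (4 ^ n * (snd p + h * snd w) - 4 ^ n * snd p) with (h * (4 ^ n * snd w)) by ring.
    rewrite !Rabs_mult, (Rabs_right h), (Rabs_right (4 ^ n)) by lra; lra.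
Qed.

Lemma F_derivative_close_along_ray L w eps :
  F_derivative_estimate gam u p n L -> returns_along w -> 0 < eps ->
  Rabs (fst (mapply L w) - fst (mapply (orbit_jacobian n) w)) <= eps * norm2 w + eps /\
  Rabs (snd (mapply L w) - snd (mapply (orbit_jacobian n) w)) <= eps * norm2 w + eps.
Proof.
  intros HF Hret Heps; set (G := orbit_jacobian n); destruct (HF eps Heps) as [del [Hdel Hest]].
  pose proof (Rabs_pos (snd w)); pose proof (pow_lt 4 n ltac:(lra)).
  pose proof (sqrt_pos (fst w ^ 2 + snd w ^ 2)).
  destruct (Hierarchy.filter_ex (F := at_right 0) _
    (filter_and (F := at_right 0) _ _ at_right_gt0 (filter_and (F := at_right 0) _ _ Hret
    (filter_and (F := at_right 0) _ _
      (has_jacobian_ray_taylor _ p G w eps (orbit_has_jacobian n (le_n n)) Heps)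
    (filter_and (F := at_right 0) _ _
      (at_right_mul_lt (norm2 w) del ltac:(unfold norm2; lra) Hdel)
      (at_right_mul_lt (4 ^ n * Rabs (snd w)) (1/2) ltac:(nra) ltac:(lra)))))))
    as (h & Hh & [HM Hfr] & [Hx Ht] & Hdel_h & Hchart).
  destruct (chart_along_ray w h ltac:(lra) Hchart) as [C1 C2].
  specialize (Hest _ n HM); rewrite C1, C2, psub_ray in Hest.
  destruct w as [s d]; cbn [fst snd] in *.
  rewrite mapply_scale, norm2_scale, Rabs_right in Hest by lra; specialize (Hest Hdel_h Hfr).
  set (E := psub (psub (Nat.iter n lift (ray p (s, d) h)) (Nat.iter n lift p))
                 (h * fst (mapply L (s, d)), h * snd (mapply L (s, d)))) in Hest.
  pose proof (abs_fst_le_norm2 E) as E1; pose proof (abs_snd_le_norm2 E) as E2.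
  unfold E, psub in E1, E2; cbn [fst snd] in E1, E2.
  split; eapply (Rabs_sub_le_of_estimates h _ _ _ (eps * norm2 (s, d)) eps Hh).
  - eapply Rle_trans; [exact E1 | eapply Rle_trans; [exact Hest | right; ring]].
  - now rewrite (Rmult_comm h).
  - eapply Rle_trans; [exact E2 | eapply Rle_trans; [exact Hest | right; ring]].
  - now rewrite (Rmult_comm h).
Qed.

Lemma F_derivative_eq_along_ray L w :
  F_derivative_estimate gam u p n L -> returns_along w -> mapply L w = mapply (orbit_jacobian n) w.
Proof.
  intros HF Hret; pose proof (fun eps => F_derivative_close_along_ray L w eps HF Hret) as Hclose.
  destruct (mapply L w) as [a b], (mapply (orbit_jacobian n) w) as [a' b']; cbn [fst snd] in Hclose.
  f_equal; apply Rminus_diag_uniq, (eq_0_of_le_eps _ (norm2 w + 1)); intros eps Heps;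
    replace (eps * (norm2 w + 1)) with (eps * norm2 w + eps) by ring; now destruct (Hclose eps Heps).
Qed.

End Orbit.

Lemma F_has_derivative_expands p L : inY gam u p -> F_has_derivative gam u p L -> expands 4 L.
Proof.
  intros HY HF; pose proof (F_has_derivative_fst_gt_34 gam u p L HY HF) as Hright.
  destruct HF as (n & Hret & _ & Hest); destruct HY as [_ [HM _]].
  destruct (returns_along_two_directions p n HM Hright Hret) as (s & d & Hs & Hd & Hray0 & Hray1).
  intros v; rewrite (mapply_eq_of_two_dirs L (orbit_jacobian p n) s d Hs Hd
    (F_derivative_eq_along_ray p n HM Hright Hret L _ Hest Hray0)
    (F_derivative_eq_along_ray p n HM Hright Hret L _ Hest Hray1) v).
  now apply orbit_jacobian_expands.
Qed.

End ReturnMap.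

Theorem proposition2p1 :
  forall gam : R, 0 < gam ->
  exists small : R, 0 < small /\
  forall (u : R -> R -> R) (c0 : R),
    (* u : [0,3/4] x T -> (0,oo), C^2, u(0,theta) = c0 > 0 *)
    C2 u ->
    (forall x t, u x (t + 1) = u x t) ->
    (forall x t, 0 <= x <= 3/4 -> 0 < u x t) ->
    0 < c0 ->
    (forall t, u 0 t = c0) ->
    (* x (1 + x^gamma u) <= 1 on [0,3/4] x T *)
    (forall x t, 0 <= x <= 3/4 -> f1_left gam u x t <= 1) ->
    (* |(Df) v| >= |v| on [0,3/4] x T *)
    (forall (p : pt) (L : mat), left_strip p ->
       has_derivative_within left_strip (flift gam u) p L ->
       forall v : pt, norm2 v <= norm2 (mapply L v)) ->
    (* f_1(3/4, theta) > 15/16 *)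
    (forall t, f1_left gam u (3/4) t > 15/16) ->
    (* sup |x du/dx| and sup |du/dtheta| sufficiently small *)
    (forall x t d, 0 <= x <= 3/4 ->
       derivable_pt_lim (fun s => u s t) x d -> Rabs (x * d) <= small) ->
    (forall x t d, 0 <= x <= 3/4 ->
       derivable_pt_lim (fun s => u x s) t d -> Rabs d <= small) ->
    (* conclusion: |(DF) v| >= 4 |v| wherever F is differentiable on Y *)
    forall (p : pt) (L : mat),
      inY gam u p -> F_has_derivative gam u p L ->
      forall v : pt, 4 * norm2 v <= norm2 (mapply L v).
Proof.
  intros gam Hgam; exists (1/2); split; [lra|].
  intros u c0 HC2 Hper Hpos _ _ Hle1 Hexp H15 Hsx Hst p L HY HF.
  destruct HC2 as (ux & ut & _ & _ & _ & _ & Hdx & Hdt & _ & _ & _ & _ & _ & Hcux & _).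
  enough (Hexpands : expands 4 L) by exact Hexpands.
  apply (F_has_derivative_expands gam u ux ut) with (p := p); auto.
  - intros x t Hx; apply (Hsx x t); [assumption | apply Hdx].
  - intros x t Hx; apply (Hst x t); [assumption | apply Hdt].
Qed.
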